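(* Let $I=(N,A,V)$ be an instance with three agents $N=\{1,2,3\}$, binary valuations ($V_i(j,a)\in\{0,1\}$) satisfying the no-chore assumption ($V_i(i,a)\ge V_i(j,a)$ for all $i,j,a$). Suppose there is an agent $i\in N$ such that $\Delta_{ij}(a)=0$ for every item $a\in A$ and every $j\in N$. Then $I$ admits an EF1 complete allocation.
   Context: An allocation $\pi=(\pi_1,\pi_2,\pi_3)$ consists of pairwise disjoint bundles (complete if they cover $A$); $\pi(a)$ is the agent receiving $a$; $V_i(j,a)$ is agent $i$'s value when item $a$ goes to $j$; $V_i(\pi)=\sum_{a\text{ assigned in }\pi}V_i(\pi(a),a)$; $\pi^{i\leftrightarrow j}$ swaps bundles of $i$ and $j$. A complete allocation $\pi$ is EF1 if for all $i,j$ there exist $C\subseteq A$ with $|C|\le1$ and the allocation $\lambda$ with $\lambda_\ell=\pi_\ell\setminus C$ for all $\ell$ such that $V_i(\lambda)\ge V_i(\lambda^{i\leftrightarrow j})$. $\Delta_{ij}(a)=V_i(i,a)-V_i(j,a)$. *)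

From mathcomp Require Import all_boot all_order all_algebra.
Set Implicit Arguments. Unset Strict Implicit. Unset Printing Implicit Defensive.
Import Order.TTheory GRing.Theory Num.Theory.

(* Agents are 'I_3 (agents 1,2,3 ~ 0,1,2); items form a finite type A.
   A valuation V i j a : nat is agent i's value when item a goes to agent j. *)
Definition valuation (A : finType) := 'I_3 -> 'I_3 -> A -> nat.

Definition allocation (A : finType) := 'I_3 -> {set A}.

Definition disjoint_bundles (A : finType) (pi : allocation A) : Prop :=
  forall l m : 'I_3, l != m -> [disjoint pi l & pi m].

Definition complete_alloc (A : finType) (pi : allocation A) : Prop :=
  disjoint_bundles pi /\ (forall a : A, exists l : 'I_3, a \in pi l).

(* V_i(pi) = sum over assigned items a of V_i(pi(a), a)
   (for pairwise disjoint bundles). *)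
Definition val_alloc (A : finType) (V : valuation A) (i : 'I_3)
  (pi : allocation A) : nat :=
  \sum_(l < 3) \sum_(a in pi l) V i l a.

Definition swap_alloc (A : finType) (pi : allocation A) (i j : 'I_3)
  : allocation A := fun l => if l == i then pi j else if l == j then pi i else pi l.

Definition remove_items (A : finType) (pi : allocation A) (C : {set A})
  : allocation A := fun l => pi l :\: C.

Definition EF1 (A : finType) (V : valuation A) (pi : allocation A) : Prop :=
  complete_alloc pi /\
  forall i j : 'I_3, exists C : {set A}, #|C| <= 1 /\
    val_alloc V i (swap_alloc (remove_items pi C) i j)
      <= val_alloc V i (remove_items pi C).

Definition binary_val (A : finType) (V : valuation A) : Prop :=
  forall i j a, V i j a <= 1.

Definition no_chore (A : finType) (V : valuation A) : Prop :=
  forall i j a, V i j a <= V i i a.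

Definition Delta (A : finType) (V : valuation A) (i j : 'I_3) (a : A) : int :=
  (V i i a)%:Z - (V i j a)%:Z.

(* Agent i is indifferent to who receives an item, so no swap of bundles can
   make i envious, and i may be given nothing.  For p <> q, binary no-chore
   valuations make Delta_pq the indicator of gain p q, so swapping the bundles
   of p and q changes p's value by the number of gain p q items in q's bundle
   minus those in p's own; EF1 for p towards q thus means that q's bundle holds
   at most one more such item.  Let K = gain k j, J = gain j k and split the
   contested items K :&: J in two halves: k receives K except one half S, and j
   receives everything else. *)

From mathcomp Require Import all_boot all_order all_algebra.
From mathcomp Require Import zify.

Set Implicit Arguments.
Unset Strict Implicit.
Unset Printing Implicit Defensive.

Section Gains.
Variables (A : finType) (V : valuation A).

Definition gain (p q : 'I_3) : {set A} := [set a | V p q a < V p p a].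

Lemma val_alloc_swap_self (pi : allocation A) i p :
  val_alloc V i (swap_alloc pi p p) = val_alloc V i pi.
Proof.
by apply: eq_bigr => l _; rewrite /swap_alloc; case: eqVneq => [->|].
Qed.

Hypothesis V_no_chore : no_chore V.

Lemma val_alloc_swap (pi : allocation A) p q : p != q ->
  val_alloc V p (swap_alloc pi p q) + \sum_(a in pi p) (V p p a - V p q a)
  = val_alloc V p pi + \sum_(a in pi q) (V p p a - V p q a).
Proof.
move=> pq; have qp : q != p by rewrite eq_sym.
rewrite /val_alloc (bigD1 p) //= [in RHS](bigD1 p) //= (bigD1 q qp) /= (bigD1 q qp) /=.
under [X in _ + (_ + X) + _ = _]eq_bigr => l /andP[/negbTE lp /negbTE lq]
  do rewrite /swap_alloc lp lq.
rewrite /swap_alloc eqxx (negbTE qp) eqxx.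
have split_gap X : \sum_(a in X) V p p a
    = \sum_(a in X) (V p p a - V p q a) + \sum_(a in X) V p q a.
  by rewrite -big_split; apply: eq_bigr => a _ /=; rewrite subnK.
rewrite !split_gap; lia.
Qed.

Hypothesis V_binary : binary_val V.

Lemma sum_gap_card (X : {set A}) p q :
  \sum_(a in X) (V p p a - V p q a) = #|X :&: gain p q|.
Proof.
rewrite -sum1_card big_mkcond [RHS]big_mkcond; apply: eq_bigr => a _.
rewrite !inE; case: (a \in X) => //=.
have := V_binary p p a; have := V_no_chore p q a; case: ltnP; lia.
Qed.

Lemma swap_le_of_gain_card (pi : allocation A) p q : p != q ->
  #|pi q :&: gain p q| <= #|pi p :&: gain p q| ->
  val_alloc V p (swap_alloc pi p q) <= val_alloc V p pi.
Proof. by move=> pq; have := val_alloc_swap pi pq; rewrite !sum_gap_card; lia. Qed.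

Lemma EF1_pair_of_gain_card (pi : allocation A) p q :
  p != q -> [disjoint pi p & pi q] ->
  #|pi q :&: gain p q| <= #|pi p :&: gain p q|.+1 ->
  exists C : {set A}, #|C| <= 1 /\
    val_alloc V p (swap_alloc (remove_items pi C) p q)
      <= val_alloc V p (remove_items pi C).
Proof.
move=> pq dis_pq le_pq.
have [Q0|[x xQ]] := set_0Vmem (pi q :&: gain p q).
  exists set0; rewrite cards0; split=> //; apply: swap_le_of_gain_card => //.
  by rewrite /remove_items !setD0 Q0 cards0.
exists [set x]; rewrite cards1; split=> //; apply: swap_le_of_gain_card => //.
have x_pi_p : x \notin pi p.
  by case/setIP: xQ => x_pi_q _; rewrite (disjointFl dis_pq x_pi_q).
rewrite /remove_items [pi p :\: _](setDidPl _); last by rewrite disjoint_sym disjoints1.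
rewrite setIDAC.
by move: le_pq; rewrite (cardsD1 x (pi q :&: gain p q)) xQ.
Qed.

Lemma EF1_of_gain_card (pi : allocation A) : complete_alloc pi ->
  (forall p q, p != q -> #|pi q :&: gain p q| <= #|pi p :&: gain p q|.+1) ->
  EF1 V pi.
Proof.
move=> pi_complete le_gain; split=> // p q.
have [<-|pq] := eqVneq p q.
  by exists set0; rewrite cards0 val_alloc_swap_self.
exact: EF1_pair_of_gain_card pq (pi_complete.1 p q pq) (le_gain p q pq).
Qed.

End Gains.

Lemma exists_halving_subset (A : finType) (T : {set A}) :
  exists S : {set A},
    [/\ S \subset T, #|S| <= #|T :\: S|.+1 & #|T :\: S| <= #|S|.+1].
Proof.
have /card_geqP[s [s_uniq s_size s_T]] : #|T| %/ 2 <= #|T| by exact: leq_div.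
exists [set x in s]; have S_T : [set x in s] \subset T.
  by apply/subsetP => x; rewrite inE; exact: s_T.
rewrite cardsD (setIidPr S_T) cardsE (card_uniqP s_uniq) s_size; split=> //; lia.
Qed.

Lemma ord3_third (i j k l : 'I_3) :
  i != j -> i != k -> j != k -> l != j -> l != k -> l = i.
Proof.
by case: i j k l => [[|[|[|?]]] ?] [[|[|[|?]]] ?] [[|[|[|?]]] ?] [[|[|[|?]]] ?] //=;
  rewrite ?eqE /= ?eqxx //= => *; apply: val_inj.
Qed.

Lemma ord3_others (i : 'I_3) : exists j k : 'I_3, [/\ i != j, i != k & j != k].
Proof. by exists (i + 1)%R, (i + 2)%R; case: i => [[|[|[|?]]] ?]. Qed.

Section IndifferentAgent.
Variables (A : finType) (V : valuation A) (i j k : 'I_3).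
Hypotheses (ij : i != j) (ik : i != k) (jk : j != k).

Definition split_alloc (K S : {set A}) : allocation A :=
  fun l => if l == j then ~: K :|: S else if l == k then K :\: S else set0.

Lemma split_alloc_complete K S : complete_alloc (split_alloc K S).
Proof.
split=> [l m lm | a]; last first.
  have [aKS | aKS] := boolP (a \in K :\: S).
    by exists k; rewrite /split_alloc eq_sym (negbTE jk) eqxx.
  exists j; rewrite /split_alloc eqxx !inE.
  by move: aKS; rewrite !inE; case: (a \in K); case: (a \in S).
rewrite -setI_eq0 /split_alloc; apply/eqP/setP => a.
repeat case: ifP => [/eqP ?|_]; subst; rewrite ?eqxx // in lm *.
all: by rewrite !inE; case: (a \in K); case: (a \in S).
Qed.

Hypotheses (V_binary : binary_val V) (V_no_chore : no_chore V).
Hypothesis V_indifferent : forall l a, V i l a = V i i a.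

Lemma gain_indifferent q : gain V i q = set0.
Proof. by apply/setP => a; rewrite !inE V_indifferent ltnn. Qed.

Lemma split_alloc_EF1 (S : {set A})
    (K := gain V k j) (J := gain V j k) (T := K :&: J) :
  S \subset T -> #|S| <= #|T :\: S|.+1 -> #|T :\: S| <= #|S|.+1 ->
  EF1 V (split_alloc K S).
Proof.
move=> S_T S_le T_le; have [S_K S_J] := subsetIP S_T.
apply: EF1_of_gain_card => //; first exact: split_alloc_complete.
move=> p q pq; rewrite /split_alloc -/K -/J.
have [p_jk | /norP[pj pk]] := boolP ((p == j) || (p == k)); last first.
  by rewrite (ord3_third ij ik jk pj pk) gain_indifferent setI0 cards0.
have [q_jk | /norP[/negbTE-> /negbTE->]] := boolP ((q == j) || (q == k)); last first.
  by rewrite set0I cards0.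
have kj : k != j by rewrite eq_sym.
move: pq; case/orP: q_jk => /eqP->; case/orP: p_jk => /eqP->;
  rewrite ?eqxx ?(negbTE kj) // => _.
  rewrite -/K setIUl [~: K :&: K]setIC setICr set0U (setIidPl S_K).
  rewrite (setIidPl (subsetDl K S)).
  by apply: leq_trans S_le _; rewrite ltnS subset_leq_card // setSD // subsetIl.
rewrite -/J setIDAC -/T.
by apply: leq_trans T_le _; rewrite ltnS subset_leq_card // subsetI subsetUr S_J.
Qed.

End IndifferentAgent.

Theorem lemma5 (A : finType) (V : valuation A) :
  binary_val V -> no_chore V ->
  (exists i : 'I_3, forall (j : 'I_3) (a : A), Delta V i j a = 0%R) ->
  exists pi : allocation A, complete_alloc pi /\ EF1 V pi.
Proof.
move=> V_binary V_no_chore [i Delta_i0].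
have V_indifferent l a : V i l a = V i i a.
  by case/GRing.subr0_eq: (Delta_i0 l a).
have [j [k [ij ik jk]]] := ord3_others i.
have [S [S_T S_le T_le]] := exists_halving_subset (gain V k j :&: gain V j k).
exists (split_alloc j k (gain V k j) S); split; first exact: split_alloc_complete.
exact: (split_alloc_EF1 ij ik jk V_binary V_no_chore V_indifferent S_T).
Qed.
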